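(* Let $R$ be a $*$-ring and $a\in R$. If $a$ is strongly $*$-regular, then $a$ is strongly $\pi$-$*$-regular; and if $a$ is strongly $\pi$-$*$-regular, then $a$ is strongly $*$-clean.
   Context: A $*$-ring is a ring with identity with an involution $*$. A projection is $p$ with $p^2=p=p^*$. $a$ is strongly $*$-regular if $a=pu=up$ for a projection $p$ and a unit $u$. $a$ is strongly $\pi$-$*$-regular if there exist a projection $e$, a unit $u$ and $m\ge1$ with $a^m=eu$ and $a,e,u$ pairwise commuting. $a$ is strongly $*$-clean if $a=p+u$ with $p$ a projection, $u$ a unit and $pu=up$. *)

From HB Require Import structures.
From mathcomp Require Import all_boot all_order all_algebra.
Set Implicit Arguments. Unset Strict Implicit. Unset Printing Implicit Defensive.
Import GRing.Theory.
Local Open Scope ring_scope.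

Record involution (R : pzRingType) := Involution {
  inv_fun :> R -> R;
  inv_add : forall x y, inv_fun (x + y) = inv_fun x + inv_fun y;
  inv_mul : forall x y, inv_fun (x * y) = inv_fun y * inv_fun x;
  inv_invol : forall x, inv_fun (inv_fun x) = x
}.

Definition is_unit (R : pzRingType) (u : R) : Prop :=
  exists v : R, u * v = 1 /\ v * u = 1.

Definition is_projection (R : pzRingType) (s : involution R) (p : R) : Prop :=
  p * p = p /\ s p = p.

Definition strongly_star_regular (R : pzRingType) (s : involution R) (a : R) : Prop :=
  exists p u : R, is_projection s p /\ is_unit u /\ a = p * u /\ a = u * p.

Definition strongly_pi_star_regular (R : pzRingType) (s : involution R) (a : R) : Prop :=
  exists (e u : R) (m : nat), (1 <= m)%N /\ is_projection s e /\ is_unit u /\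
    a ^+ m = e * u /\ a * e = e * a /\ a * u = u * a /\ e * u = u * e.

Definition strongly_star_clean (R : pzRingType) (s : involution R) (a : R) : Prop :=
  exists p u : R, is_projection s p /\ is_unit u /\ a = p + u /\ p * u = u * p.

From mathcomp Require Import all_boot all_order all_algebra.
Set Implicit Arguments.
Unset Strict Implicit.
Unset Printing Implicit Defensive.
Import GRing.Theory.
Local Open Scope ring_scope.

(* A strongly *-regular element a = pu = up is strongly pi-*-regular with
   m = 1, e = p.  Conversely, if a^m = eu with a, e, u commuting, then
   a - (1 - e) is a unit: on the corner e it acts as a, which is invertible
   there since a * a^(m-1) u^-1 = e; on the corner 1 - e it acts as a - 1,
   which is invertible there since (a - 1)(1 + a + ... + a^(m-1)) = eu - 1
   is -1 on that corner.  Gluing the two corner inverses gives the inverse,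
   so a = (1 - e) + (a - (1 - e)) is strongly *-clean. *)

Section Involution.

Variables (R : pzRingType) (s : involution R).

Lemma involution0 : s 0 = 0.
Proof. by apply: (addrI (s 0)); rewrite -inv_add !addr0. Qed.

Lemma involutionN (x : R) : s (- x) = - s x.
Proof. by apply: (addIr (s x)); rewrite -inv_add !addNr involution0. Qed.

Lemma involution1 : s 1 = 1.
Proof. by have := inv_mul s (s 1) 1; rewrite mulr1 !inv_invol mulr1. Qed.

Lemma projectionC (p : R) : is_projection s p -> is_projection s (1 - p).
Proof.
move=> [pp sp]; split; last by rewrite inv_add involutionN involution1 sp.
by rewrite mulrBl mul1r mulrBr mulr1 pp subrr subr0.
Qed.

End Involution.

Section Units.

Variable R : pzRingType.

Lemma commr_unit_inv (x u v : R) :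
  u * v = 1 -> v * u = 1 -> GRing.comm x u -> GRing.comm x v.
Proof.
move=> uv vu cxu; rewrite /GRing.comm.
by rewrite -[x * v]mul1r -vu -mulrA (mulrA u) -cxu -mulrA uv mulr1.
Qed.

Lemma is_unit_comm_rinv (x w : R) : x * w = 1 -> GRing.comm x w -> is_unit x.
Proof. by move=> xw cxw; exists w; rewrite -cxw. Qed.

Lemma is_unit_corners (e x y z : R) :
  GRing.comm x e -> GRing.comm x y -> GRing.comm x z ->
  e * (x * y) = e -> (1 - e) * (x * z) = 1 - e -> is_unit x.
Proof.
move=> cxe cxy cxz exy fxz.
have cxf : GRing.comm x (1 - e) by apply: commrB; [apply: commr1 |].
apply: (@is_unit_comm_rinv _ (e * y + (1 - e) * z)).
  by rewrite mulrDr !mulrA cxe cxf -!mulrA exy fxz addrC subrK.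
by apply: commrD; apply: commrM.
Qed.

End Units.

Section StronglyPiStarRegular.

Variables (R : pzRingType) (a e u v : R) (m : nat).
Hypotheses (m_gt0 : (0 < m)%N) (ee : e * e = e) (am : a ^+ m = e * u)
  (uv : u * v = 1) (vu : v * u = 1)
  (cae : GRing.comm a e) (cau : GRing.comm a u) (ceu : GRing.comm e u).

Let cav : GRing.comm a v := commr_unit_inv uv vu cau.
Let cev : GRing.comm e v := commr_unit_inv uv vu ceu.
Let cXe (i : nat) : GRing.comm e (a ^+ i) := commrX i (commr_sym cae).
Let cXa (i : nat) : GRing.comm a (a ^+ i) := commrX i (commr_refl a).

Let mulr_idemC : e * (1 - e) = 0.
Proof. by rewrite mulrBr mulr1 ee subrr. Qed.
Let mulr_Cidem : (1 - e) * e = 0.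
Proof. by rewrite mulrBl mul1r ee subrr. Qed.
Let mulr_CidemC : (1 - e) * (1 - e) = 1 - e.
Proof. by rewrite mulrBr mulr1 mulr_Cidem subr0. Qed.

Lemma mul_expr_pred_inv : a * (a ^+ m.-1 * v) = e.
Proof. by rewrite mulrA -exprS prednK // am -mulrA uv mulr1. Qed.

Lemma corner_mul_geometric :
  (1 - e) * ((a - 1) * \sum_(i < m) a ^+ i) = - (1 - e).
Proof.
by rewrite -subrX1 am mulrBr mulr1 mulrA mulr_Cidem mul0r sub0r.
Qed.

Lemma is_unit_sub_idempotentC : is_unit (a - (1 - e)).
Proof.
set x := a - (1 - e); set S := \sum_(i < m) a ^+ i; set W := a ^+ m.-1 * v.
have commx c : GRing.comm a c -> GRing.comm e c -> GRing.comm x c.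
  by move=> cac cec; apply/commr_sym/commrB; [|apply: commrB; [apply: commr1|]];
    apply/commr_sym.
have exW : e * (x * W) = e.
  by rewrite mulrA mulrBr mulr_idemC subr0 -mulrA mul_expr_pred_inv ee.
have fxS : (1 - e) * (x * - S) = 1 - e.
  have fx : (1 - e) * x = (1 - e) * (a - 1).
    by rewrite mulrBr mulr_CidemC [in RHS]mulrBr mulr1.
  by rewrite !mulrN mulrA fx -mulrA corner_mul_geometric opprK.
apply: (is_unit_corners (commx e cae (commr_refl e)) _ _ exW fxS).
  by apply: commx; apply: commrM.
by apply: commx; apply/commrN/commr_sum.
Qed.

End StronglyPiStarRegular.

Section StarRingClasses.

Variables (R : pzRingType) (s : involution R) (a : R).

Lemma strongly_star_regular_pi :
  strongly_star_regular s a -> strongly_pi_star_regular s a.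
Proof.
move=> [p [u [[pp sp] [u_unit [apu aup]]]]].
exists p, u, 1%N; do 3!split => //.
split; first by rewrite expr1.
split; first by rewrite {1}aup -mulrA pp -aup {2}apu mulrA pp -apu.
by rewrite {1}aup -mulrA -apu -aup.
Qed.

Lemma strongly_pi_star_regular_clean :
  strongly_pi_star_regular s a -> strongly_star_clean s a.
Proof.
move=> [e [u [m [m_gt0 [pe [[v [uv vu]] [am [cae [cau ceu]]]]]]]]].
exists (1 - e), (a - (1 - e)); split; first exact: projectionC.
split; first exact: (is_unit_sub_idempotentC m_gt0 pe.1 am uv vu cae cau ceu).
split; first by rewrite addrC subrK.
exact: commrB (commr_sym (commrB (commr1 a) cae)) (commr_refl _).
Qed.

End StarRingClasses.

Theorem corollary3p4 (R : pzRingType) (s : involution R) (a : R) :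
  (strongly_star_regular s a -> strongly_pi_star_regular s a) /\
  (strongly_pi_star_regular s a -> strongly_star_clean s a).
Proof.
split; [exact: strongly_star_regular_pi | exact: strongly_pi_star_regular_clean].
Qed.
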